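(* Let $V:\mathbb{R}\to\mathbb{R}$ be analytic at the origin. Then $V$ is separable (i.e. there exist univariate functions $F,G$ with $V\left(\frac{u+v}{2}\right)-V\left(\frac{u-v}{2}\right)=F(u)\,G(v)$ for all $u,v$) if and only if $V$ admits the functional form $$V\left(\frac{u+v}{2}\right)=\frac{1}{2}f(u)\,g(v)+h(u,v)$$ for some functions $f$ of $u$, $g$ of $v$, and $h$ of $(u,v)$ satisfying $g(-v)=-g(v)$ and $h(u,-v)=h(u,v)$. In this case the divisors of $V$ are $F=f$ and $G=g$.
   Context: A potential $V(q)$ is called separable if $V\left(\frac{u+v}{2}\right)-V\left(\frac{u-v}{2}\right)=F(u)\,G(v)$ where $F$ and $G$ are univariate functions of $u$ and $v$ respectively; $F$ and $G$ are called the divisors of $V$. *)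

From Stdlib Require Import Reals.
From Coquelicot Require Import Coquelicot.
Open Scope R_scope.

Definition analytic_at_0 (V : R -> R) : Prop :=
  exists (a : nat -> R) (r : R), 0 < r /\
    forall x : R, Rabs x < r -> is_pseries a x (V x).

Definition divisors (V F G : R -> R) : Prop :=
  forall u v : R, V ((u + v) / 2) - V ((u - v) / 2) = F u * G v.

Definition separable (V : R -> R) : Prop :=
  exists F G : R -> R, divisors V F G.

(* Substituting -v for v shows that V((u+v)/2) - V((u-v)/2) is odd in v, so
   F u * G v is odd in v and G may be replaced by its odd part.  For an odd
   divisor g, V((u+v)/2) - f u g v / 2 is even in v, which is exactly the
   functional form; conversely the even part h cancels in the difference. *)
From Stdlib Require Import Reals Lra.
From Coquelicot Require Import Coquelicot.
Open Scope R_scope.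

Definition odd_part (G : R -> R) (v : R) : R := (G v - G (- v)) / 2.

Lemma odd_partN (G : R -> R) (v : R) : odd_part G (- v) = - odd_part G v.
Proof. unfold odd_part; rewrite Ropp_involutive; field. Qed.

Lemma divisors_oddr (V F G : R -> R) (u v : R) :
  divisors V F G -> F u * G (- v) = - (F u * G v).
Proof.
  intros HD.
  rewrite <- (HD u v), <- (HD u (- v)).
  replace (u + - v) with (u - v) by ring.
  replace (u - - v) with (u + v) by ring.
  ring.
Qed.

Lemma divisors_odd_part (V F G : R -> R) :
  divisors V F G -> divisors V F (odd_part G).
Proof.
  intros HD u v.
  unfold odd_part.
  replace (F u * ((G v - G (- v)) / 2)) with ((F u * G v - F u * G (- v)) / 2)
    by field.
  rewrite (divisors_oddr V F G u v HD), (HD u v).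
  field.
Qed.

Lemma divisors_decomposition (V f g : R -> R) :
  (forall v, g (- v) = - g v) -> divisors V f g ->
  exists h : R -> R -> R,
    (forall u v, h u (- v) = h u v) /\
    (forall u v, V ((u + v) / 2) = / 2 * f u * g v + h u v).
Proof.
  intros Hg HD.
  exists (fun u v => V ((u + v) / 2) - / 2 * f u * g v).
  split; [| intros u v; ring].
  intros u v.
  replace (u + - v) with (u - v) by ring.
  assert (Hdiff := HD u v).
  rewrite Hg.
  lra.
Qed.

Lemma decomposition_divisors (V f g : R -> R) (h : R -> R -> R) :
  (forall v, g (- v) = - g v) ->
  (forall u v, h u (- v) = h u v) ->
  (forall u v, V ((u + v) / 2) = / 2 * f u * g v + h u v) ->
  divisors V f g.
Proof.
  intros Hg Hh HV u v.
  replace (u - v) with (u + - v) by ring.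
  rewrite (HV u v), (HV u (- v)), Hg, Hh.
  field.
Qed.

Theorem theorem1 (V : R -> R) (HV : analytic_at_0 V) :
  (separable V <->
   exists (f g : R -> R) (h : R -> R -> R),
     (forall v, g (- v) = - g v) /\
     (forall u v, h u (- v) = h u v) /\
     (forall u v, V ((u + v) / 2) = / 2 * f u * g v + h u v)) /\
  (forall (f g : R -> R) (h : R -> R -> R),
     (forall v, g (- v) = - g v) ->
     (forall u v, h u (- v) = h u v) ->
     (forall u v, V ((u + v) / 2) = / 2 * f u * g v + h u v) ->
     divisors V f g).
Proof.
  split; [split |].
  - intros [F [G HD]].
    destruct (divisors_decomposition V F (odd_part G) (odd_partN G)
                (divisors_odd_part V F G HD)) as [h [Hh HVh]].
    exists F, (odd_part G), h.
    split; [exact (odd_partN G) | split; assumption].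
  - intros [f [g [h [Hg [Hh HVh]]]]].
    exists f, g.
    exact (decomposition_divisors V f g h Hg Hh HVh).
  - exact (decomposition_divisors V).
Qed.
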